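(* Let $(G_n)_{n\in\mathbb N}$ be a sequence of groups. If $g\in\circledast_nG_n$ has finite order, then $g$ is conjugate in $\circledast_nG_n$ to an element of some factor $G_i$.
   Context: For a sequence of groups $(G_n)_{n\in\mathbb N}$, an infinite word is a map $w:L\to\bigsqcup_n (G_n\setminus\{1\})$ from a countable linearly ordered set $L$ such that $w^{-1}(G_n)$ is finite for every $n$. Two infinite words are equivalent if for every $m$ their restrictions to the letters from $G_1,\dots,G_m$ represent the same element of $G_1*\cdots*G_m$. The topologist's product $\circledast_n G_n$ is the group of equivalence classes, with multiplication induced by concatenation and inversion by reversing the order and inverting each letter; each $G_i$ is a subgroup (one-letter words). *)

(* Topologist's product of a sequence of (possibly infinite) groups. *)
From Stdlib Require Import List Relations Sorting.Sorted Arith.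
Import ListNotations.

Record Grp := {
  gcar :> Type;
  gmul : gcar -> gcar -> gcar;
  ginv : gcar -> gcar;
  gone : gcar;
  gmulA : forall x y z, gmul x (gmul y z) = gmul (gmul x y) z;
  gmul1 : forall x, gmul gone x = x;
  gmulV : forall x, gmul (ginv x) x = gone
}.
Arguments gmul {g} _ _.
Arguments ginv {g} _.
Arguments gone {g}.

Definition letter (G : nat -> Grp) := {n : nat & gcar (G n)}.

(* Free product G_0 * ... * G_m, presented as finite letter sequences (indices <= m)
   modulo the equivalence generated by merging adjacent letters of the same factor
   and deleting identity letters. *)
Inductive fp_step (G : nat -> Grp) (m : nat) : list (letter G) -> list (letter G) -> Prop :=
| fp_merge (s t : list (letter G)) (n : nat) (g h : G n) :
    n <= m ->
    fp_step G m (s ++ existT _ n g :: existT _ n h :: t) (s ++ existT _ n (gmul g h) :: t)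
| fp_drop (s t : list (letter G)) (n : nat) :
    n <= m ->
    fp_step G m (s ++ existT _ n (@gone (G n)) :: t) (s ++ t).

Definition fp_equiv (G : nat -> Grp) (m : nat) : relation (list (letter G)) :=
  clos_refl_sym_trans _ (fp_step G m).

Record raw_word (G : nat -> Grp) := RW {
  pos : Type;
  plt : pos -> pos -> Prop;
  plet : pos -> letter G
}.
Arguments RW {G} _ _ _.
Arguments pos {G} _.
Arguments plt {G} _ _ _.
Arguments plet {G} _ _.

Definition is_word {G : nat -> Grp} (w : raw_word G) : Prop :=
  (forall x, ~ plt w x x) /\
  (forall x y z, plt w x y -> plt w y z -> plt w x z) /\
  (forall x y, x = y \/ plt w x y \/ plt w y x) /\
  (exists f : pos w -> nat, forall x y, f x = f y -> x = y) /\
  (forall x, projT2 (plet w x) <> gone) /\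
  (forall n, exists s : list (pos w), forall x, projT1 (plet w x) = n -> In x s).

Definition restr {G : nat -> Grp} (w : raw_word G) (m : nat) (s : list (pos w)) : Prop :=
  StronglySorted (plt w) s /\ (forall x, In x s <-> projT1 (plet w x) <= m).

Definition word_equiv {G : nat -> Grp} (w1 w2 : raw_word G) : Prop :=
  forall m s1 s2, restr w1 m s1 -> restr w2 m s2 ->
    fp_equiv G m (map (plet w1) s1) (map (plet w2) s2).

Definition wconcat {G : nat -> Grp} (w1 w2 : raw_word G) : raw_word G :=
  RW (pos w1 + pos w2)%type
     (fun a b => match a, b with
                 | inl x, inl y => plt w1 x y
                 | inr x, inr y => plt w2 x y
                 | inl _, inr _ => True
                 | inr _, inl _ => False
                 end)
     (fun a => match a with inl x => plet w1 x | inr y => plet w2 y end).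

Definition winv {G : nat -> Grp} (w : raw_word G) : raw_word G :=
  RW (pos w) (fun a b => plt w b a)
     (fun a => existT _ (projT1 (plet w a)) (ginv (projT2 (plet w a)))).

Definition wempty {G : nat -> Grp} : raw_word G :=
  RW Empty_set (fun _ _ => False) (fun e => match e with end).

Definition wsingle {G : nat -> Grp} (i : nat) (a : G i) : raw_word G :=
  RW unit (fun _ _ => False) (fun _ => existT _ i a).

Fixpoint wpow {G : nat -> Grp} (w : raw_word G) (k : nat) : raw_word G :=
  match k with
  | 0 => wempty
  | S k' => wconcat (wpow w k') w
  end.

(* Normal forms in a finite free product G_0 * ... * G_m are computed by letting letters
   act on reduced words. A torsion element of such a free product has, for any word
   representing it, a cyclic rotation whose normal form has at most one letter: if the
   normal form is longer and begins and ends in the same factor, a rotation shortens it;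
   otherwise it is cyclically reduced and its powers never cancel.

   For the infinite word w, let w_m be its restriction to the letters of G_0, ..., G_m and
   cut w_m at the least position where the rotation becomes short. Restricting a good cut
   of w_M to level m <= M gives a good cut of w_m, so the heads before the least cuts grow
   with m. The positions that eventually lie in a head span a subword h; at every level
   h^-1 w h reduces to the short rotated word, and these short words are compatible under
   truncation, so they all come from one letter or are all trivial. *)

From Stdlib Require Import List Relations Sorting.Sorted Arith Lia Wf_nat.
From Stdlib Require Import Classical ClassicalEpsilon ProofIrrelevance Eqdep_dec.
Import ListNotations.

Section GroupFacts.
Context {H : Grp}.
Implicit Types x y : H.

Lemma gmulVr x : gmul x (ginv x) = gone.
Proof.
  rewrite <- (gmul1 H (gmul x (ginv x))), <- (gmulV H (ginv x)) at 1.
  rewrite <- gmulA, (gmulA H (ginv x) x (ginv x)), gmulV, gmul1.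
  apply gmulV.
Qed.

Lemma gmul1r x : gmul x gone = x.
Proof. rewrite <- (gmulV H x), gmulA, gmulVr, gmul1. reflexivity. Qed.

Lemma ginv_unique x y : gmul x y = gone -> x = ginv y.
Proof. intro E. rewrite <- (gmul1r x), <- (gmulVr y), gmulA, E, gmul1. reflexivity. Qed.

Lemma ginvK x : ginv (ginv x) = x.
Proof. symmetry. apply ginv_unique, gmulVr. Qed.

Lemma ginv_eq1 x : ginv x = gone -> x = gone.
Proof. intro E. rewrite <- (ginvK x), E, <- (gmul1r (ginv gone)). apply gmulV. Qed.

End GroupFacts.

Definition dec (P : Prop) : {P} + {~ P} := excluded_middle_informative P.

Section FreeProduct.
Variable G : nat -> Grp.
Local Notation letter := (letter G).
Local Notation ltr n g := (existT (fun j => gcar (G j)) n g).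
Implicit Types (e : letter) (r s x y : list letter).

Fixpoint reduced r : Prop :=
  match r with
  | [] => True
  | e :: r' => projT2 e <> gone /\ reduced r' /\
      match r' with [] => True | e' :: _ => projT1 e' <> projT1 e end
  end.

(* The action of a letter on reduced words (van der Waerden's trick). *)
Definition lmul e r : list letter :=
  match e with existT _ n g =>
  if dec (g = gone) then r else
  match r with
  | existT _ n' h :: r' =>
      match Nat.eq_dec n' n with
      | left E => let gh := gmul g (eq_rect n' (fun j => gcar (G j)) h n E) in
                  if dec (gh = gone) then r' else ltr n gh :: r'
      | right _ => ltr n g :: r
      end
  | [] => [ltr n g]
  end end.
Arguments lmul : simpl never.

Definition head_index_neq n r : Prop :=
  match r with [] => True | e :: _ => projT1 e <> n end.

Lemma lmul_one n r : lmul (ltr n gone) r = r.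
Proof. unfold lmul. destruct (dec _); [reflexivity|congruence]. Qed.

Lemma lmul_fresh n (g : G n) r :
  g <> gone -> head_index_neq n r -> lmul (ltr n g) r = ltr n g :: r.
Proof.
  intros Hg Hh. unfold lmul. destruct (dec _); [congruence|].
  destruct r as [|[n' h] r']; [reflexivity|]. simpl in Hh.
  destruct (Nat.eq_dec n' n); [congruence|reflexivity].
Qed.

Lemma lmul_same n (g h : G n) r : g <> gone ->
  lmul (ltr n g) (ltr n h :: r) =
  if dec (gmul g h = gone) then r else ltr n (gmul g h) :: r.
Proof.
  intros Hg. unfold lmul. destruct (dec (g = gone)); [congruence|].
  destruct (Nat.eq_dec n n) as [E|E]; [|congruence].
  rewrite (UIP_refl_nat n E). reflexivity.
Qed.

Lemma lmul_reduced e r : reduced r -> reduced (lmul e r).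
Proof.
  destruct e as [n g]. intros Hr. destruct (dec (g = gone)) as [->|Hg].
  { rewrite lmul_one. exact Hr. }
  destruct r as [|[n' h] r'].
  { rewrite lmul_fresh; simpl; auto. }
  destruct (Nat.eq_dec n' n) as [->|ne].
  - rewrite lmul_same by exact Hg. simpl in Hr. destruct Hr as (H1 & H2 & H3).
    destruct (dec _); simpl; auto.
  - rewrite lmul_fresh by (simpl; auto). simpl in Hr |- *. tauto.
Qed.

Lemma lmul_merge n (g h : G n) r : reduced r ->
  lmul (ltr n g) (lmul (ltr n h) r) = lmul (ltr n (gmul g h)) r.
Proof.
  intros Hr.
  destruct (dec (h = gone)) as [->|Eh]; [rewrite lmul_one, gmul1r; reflexivity|].
  destruct (dec (g = gone)) as [->|Eg]; [rewrite lmul_one, gmul1; reflexivity|].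
  assert (Hcase : head_index_neq n r \/
    exists h0 r', r = ltr n h0 :: r' /\ h0 <> gone /\ head_index_neq n r' /\ reduced r').
  { destruct r as [|[n' h0] r']; [left; exact I|].
    destruct (Nat.eq_dec n' n) as [->|ne]; [right|left; exact ne].
    simpl in Hr. exists h0, r'. tauto. }
  destruct Hcase as [Hd | (h0 & r' & -> & Hh0 & Hd & Hr')].
  - rewrite (lmul_fresh n h), lmul_same by auto.
    destruct (dec (gmul g h = gone)) as [E|E].
    + rewrite E, lmul_one. reflexivity.
    + rewrite lmul_fresh; auto.
  - rewrite (lmul_same n h) by auto.
    destruct (dec (gmul h h0 = gone)) as [E1|E1].
    + rewrite lmul_fresh by auto.
      destruct (dec (gmul g h = gone)) as [E2|E2].
      * rewrite E2, lmul_one. apply ginv_unique in E1, E2. subst. rewrite ginvK. reflexivity.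
      * rewrite lmul_same, <- gmulA, E1, gmul1r by auto.
        destruct (dec (g = gone)); [congruence|reflexivity].
    + rewrite lmul_same by auto.
      destruct (dec (gmul g h = gone)) as [E2|E2].
      * rewrite E2, lmul_one, gmulA, E2, gmul1.
        destruct (dec (h0 = gone)); [congruence|reflexivity].
      * rewrite lmul_same, gmulA by auto. reflexivity.
Qed.

Lemma lmul_reduced_cons e r : reduced (e :: r) -> lmul e r = e :: r.
Proof. destruct e as [n g]. intros (H1 & H2 & H3). apply lmul_fresh; auto. Qed.

Lemma lmul_length e r : length (lmul e r) <= S (length r).
Proof.
  destruct e as [n g]. unfold lmul. destruct (dec _); [lia|].
  destruct r as [|[n' h] r']; simpl; [lia|].
  destruct (Nat.eq_dec n' n); [destruct (dec _); simpl; lia|simpl; lia].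
Qed.

Definition nmul x r := fold_right lmul r x.
Definition nf x := nmul x [].

Lemma nmul_cons e x r : nmul (e :: x) r = lmul e (nmul x r).
Proof. reflexivity. Qed.

Lemma nmul_app x y r : nmul (x ++ y) r = nmul x (nmul y r).
Proof. apply fold_right_app. Qed.

Lemma nmul_reduced x r : reduced r -> reduced (nmul x r).
Proof. induction x; simpl; auto using lmul_reduced. Qed.

Lemma nf_reduced x : reduced (nf x).
Proof. apply nmul_reduced. exact I. Qed.

Lemma nmul_length x r : length (nmul x r) <= length x + length r.
Proof. induction x as [|e x IH]; simpl; [lia|]. pose proof (lmul_length e (nmul x r)). lia. Qed.

Lemma nmul_fp_equiv m x y : fp_equiv G m x y -> forall r, reduced r -> nmul x r = nmul y r.
Proof.
  induction 1 as [x y [s t n g h _|s t n _]| |x y _ IH|x y z _ IHxy _ IHyz];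
    intros r Hr.
  - rewrite !nmul_app, !nmul_cons, lmul_merge; auto using nmul_reduced.
  - rewrite !nmul_app, nmul_cons, lmul_one. reflexivity.
  - reflexivity.
  - symmetry; auto.
  - rewrite IHxy, IHyz; auto.
Qed.

Lemma nmul_lmul e s r : reduced s -> reduced r -> nmul (lmul e s) r = lmul e (nmul s r).
Proof.
  destruct e as [n g]. intros Hs Hr.
  destruct (dec (g = gone)) as [->|Eg]; [rewrite !lmul_one; reflexivity|].
  destruct s as [|[n' h] s']; [rewrite lmul_fresh by (simpl; auto); reflexivity|].
  destruct (Nat.eq_dec n' n) as [->|ne].
  - rewrite lmul_same by auto. simpl in Hs. destruct Hs as (H1 & H2 & H3).
    rewrite nmul_cons, lmul_merge by auto using nmul_reduced.
    destruct (dec _) as [E|E]; [rewrite E, lmul_one|]; reflexivity.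
  - rewrite lmul_fresh by (simpl; auto). reflexivity.
Qed.

Lemma nmul_nf x r : reduced r -> nmul x r = nmul (nf x) r.
Proof.
  intros Hr. induction x as [|e x IH]; [reflexivity|].
  rewrite nmul_cons, IH. unfold nf at 2. rewrite nmul_cons. fold (nf x).
  rewrite nmul_lmul; auto using nf_reduced.
Qed.

Lemma nf_id x : reduced x -> nf x = x.
Proof.
  induction x as [|e x IH]; [reflexivity|].
  intros Hx. unfold nf. rewrite nmul_cons. fold (nf x). rewrite IH.
  - apply lmul_reduced_cons; auto.
  - apply Hx.
Qed.

Definition linv1 e : letter := ltr (projT1 e) (ginv (projT2 e)).
Definition linv x := rev (map linv1 x).

Lemma linvK x : linv (linv x) = x.
Proof.
  unfold linv. rewrite map_rev, rev_involutive, map_map.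
  rewrite (map_ext _ (fun l => l)), map_id; [reflexivity|].
  intros [n g]. unfold linv1. simpl. rewrite ginvK. reflexivity.
Qed.

Lemma nmul_linv x r : reduced r -> nmul (linv x) (nmul x r) = r.
Proof.
  revert r. induction x as [|[n g] x IH]; intros r Hr; [reflexivity|].
  unfold linv. cbn [map rev]. rewrite nmul_app, !nmul_cons.
  change (nmul [] ?y) with y. unfold linv1. cbn [projT1 projT2].
  rewrite lmul_merge, gmulV, lmul_one by auto using nmul_reduced. apply IH, Hr.
Qed.

Lemma nmul_linv_r x r : reduced r -> nmul x (nmul (linv x) r) = r.
Proof. intros. rewrite <- (linvK x) at 1. apply nmul_linv; auto. Qed.

Definition below m x := Forall (fun e : letter => projT1 e <= m) x.

Lemma fp_equiv_app_l m a y z : fp_equiv G m y z -> fp_equiv G m (a ++ y) (a ++ z).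
Proof.
  induction 1 as [y z Hyz| | |].
  - apply rst_step. destruct Hyz; rewrite !app_assoc; constructor; auto.
  - apply rst_refl.
  - apply rst_sym; auto.
  - eapply rst_trans; eauto.
Qed.

Lemma lmul_below_fp_equiv m e r :
  below m (e :: r) -> below m (lmul e r) /\ fp_equiv G m (e :: r) (lmul e r).
Proof.
  destruct e as [n g]. intros Hok. inversion Hok as [|? ? Hn Hr]; subst. simpl in Hn.
  destruct (dec (g = gone)) as [->|Hg].
  { rewrite lmul_one. split; auto. apply rst_step, (fp_drop G m [] r n Hn). }
  destruct r as [|[n' h] r'].
  { rewrite lmul_fresh by (simpl; auto). split; [auto|apply rst_refl]. }
  destruct (Nat.eq_dec n' n) as [->|ne].
  - rewrite lmul_same by auto. inversion Hr; subst.
    assert (Hmerge : fp_equiv G m (ltr n g :: ltr n h :: r') (ltr n (gmul g h) :: r'))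
      by apply rst_step, (fp_merge G m [] r' n g h Hn).
    destruct (dec _) as [E|E]; [|split; auto; constructor; auto].
    split; auto. eapply rst_trans; [exact Hmerge|].
    rewrite E. apply rst_step, (fp_drop G m [] r' n Hn).
  - rewrite lmul_fresh by (simpl; auto). split; [auto|apply rst_refl].
Qed.

Lemma nmul_below m x r : below m x -> below m r -> below m (nmul x r).
Proof.
  induction x as [|e x IH]; intros Hx Hr; [exact Hr|]. inversion Hx; subst.
  rewrite nmul_cons. eapply proj1, lmul_below_fp_equiv. constructor; [|apply IH]; assumption.
Qed.

Lemma nf_below m x : below m x -> below m (nf x).
Proof. intros. apply nmul_below; auto. constructor. Qed.

Lemma nf_fp_equiv m x : below m x -> fp_equiv G m x (nf x).
Proof.
  induction x as [|e x IH]; intros Hx; [apply rst_refl|].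
  inversion Hx; subst. unfold nf. rewrite nmul_cons. fold (nf x).
  eapply rst_trans; [apply (fp_equiv_app_l m [e]), IH; assumption|].
  eapply proj2, lmul_below_fp_equiv. constructor; [|apply nf_below]; assumption.
Qed.

Lemma nf_eq_of_fp_equiv m x y : fp_equiv G m x y -> nf x = nf y.
Proof. intros E. apply (nmul_fp_equiv m x y E). exact I. Qed.

Lemma fp_equiv_of_nf_eq m x y : below m x -> below m y -> nf x = nf y -> fp_equiv G m x y.
Proof.
  intros Hx Hy E. eapply rst_trans; [apply nf_fp_equiv; auto|].
  rewrite E. apply rst_sym, nf_fp_equiv; auto.
Qed.

Definition trunc m x := filter (fun e : letter => projT1 e <=? m) x.

Lemma trunc_fp_equiv M m x y : fp_equiv G M x y -> fp_equiv G m (trunc m x) (trunc m y).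
Proof.
  induction 1 as [x y Hxy| | |].
  - destruct Hxy as [s t n g h _|s t n _]; unfold trunc; rewrite !filter_app; simpl;
      destruct (Nat.leb_spec n m); try apply rst_refl; apply rst_step; constructor; auto.
  - apply rst_refl.
  - apply rst_sym; auto.
  - eapply rst_trans; eauto.
Qed.

Lemma nf_trunc_nf M m x : below M x -> nf (trunc m x) = nf (trunc m (nf x)).
Proof.
  intros Hx. apply (nf_eq_of_fp_equiv m), (trunc_fp_equiv M), nf_fp_equiv, Hx.
Qed.

Lemma nf_trunc_short m x : reduced x -> length x <= 1 -> nf (trunc m x) = trunc m x.
Proof.
  intros Hx Hl. apply nf_id.
  destruct x as [|e [|e' x]]; simpl in *; [exact I| |lia].
  unfold trunc; simpl. destruct (_ <=? _); simpl; tauto.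
Qed.

Lemma nf_trunc_length_le1 M m x :
  below M x -> length (nf x) <= 1 -> length (nf (trunc m x)) <= 1.
Proof.
  intros Hx Hl. rewrite (nf_trunc_nf M m x Hx), nf_trunc_short by auto using nf_reduced.
  unfold trunc. rewrite filter_length_le. exact Hl.
Qed.

Fixpoint lpow x k : list letter :=
  match k with 0 => [] | S k => lpow x k ++ x end.

Lemma lpow_length x k : length (lpow x k) = k * length x.
Proof. induction k; simpl; auto. rewrite length_app, IHk. lia. Qed.

Lemma nmul_lpow_nf x k r : reduced r -> nmul (lpow x k) r = nmul (lpow (nf x) k) r.
Proof.
  revert r; induction k as [|k IH]; intros r Hr; [reflexivity|].
  simpl. rewrite !nmul_app, (nmul_nf x r) by auto. apply IH, nmul_reduced, Hr.
Qed.

Lemma reduced_app x y : reduced x -> reduced y ->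
  (forall d, x <> [] -> y <> [] -> projT1 (last x d) <> projT1 (hd d y)) -> reduced (x ++ y).
Proof.
  induction x as [|e x IH]; intros Hx Hy Hxy; simpl; auto.
  destruct Hx as (H1 & H2 & H3). split; [auto|split].
  - apply IH; auto. intros d Hne Hyne. specialize (Hxy d ltac:(discriminate) Hyne).
    destruct x; [congruence|exact Hxy].
  - destruct x as [|e' x'].
    + destruct y as [|e'' y]; [exact I|]. simpl. intros E.
      apply (Hxy e); [discriminate|discriminate|symmetry; exact E].
    + exact H3.
Qed.

Lemma reduced_lpow r k : reduced r -> r <> [] ->
  (forall d, projT1 (last r d) <> projT1 (hd d r)) -> reduced (lpow r k).
Proof.
  intros Hr Hne Hc. induction k as [|k IH]; simpl; [exact I|].
  apply reduced_app; auto. intros d H1 _.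
  destruct k; [simpl in H1; congruence|]. simpl.
  destruct (exists_last Hne) as (r0 & a & ->).
  rewrite app_assoc, last_last. specialize (Hc d). rewrite last_last in Hc. exact Hc.
Qed.

Lemma lpow_rotate p q k : lpow (q ++ p) k ++ q = q ++ lpow (p ++ q) k.
Proof.
  induction k as [|k IH]; simpl; [symmetry; apply app_nil_r|].
  replace ((lpow (q ++ p) k ++ q ++ p) ++ q) with ((lpow (q ++ p) k ++ q) ++ p ++ q)
    by (rewrite <- !app_assoc; reflexivity).
  rewrite IH, <- app_assoc. reflexivity.
Qed.

(* Rotating a word conjugates it, so it preserves torsion. *)
Lemma nf_lpow_rotate p q k : nf (lpow (p ++ q) k) = [] -> nf (lpow (q ++ p) k) = [].
Proof.
  intros H. unfold nf. set (X := nmul (linv q) []).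
  assert (HX : reduced X) by apply nmul_reduced, I.
  rewrite <- (nmul_linv_r q [] I) at 1. fold X. rewrite <- nmul_app, lpow_rotate, nmul_app.
  rewrite (nmul_nf (lpow (p ++ q) k) X HX), H. apply nmul_linv_r, I.
Qed.

Lemma lmul_cases e r :
  lmul e r = r \/ (exists a, r = a :: lmul e r) \/
  (exists a b r', r = a :: r' /\ lmul e r = b :: r') \/ lmul e r = e :: r.
Proof.
  destruct e as [n g]. destruct (dec (g = gone)) as [->|Hg]; [left; apply lmul_one|].
  destruct r as [|[n' h] r'].
  { right; right; right. apply lmul_fresh; simpl; auto. }
  destruct (Nat.eq_dec n' n) as [->|ne].
  - rewrite lmul_same by auto. destruct (dec _); [right; left|right; right; left]; eauto.
  - right; right; right. apply lmul_fresh; simpl; auto.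
Qed.

Lemma nf_suffix x z T : nf x = z ++ T -> exists p q, x = p ++ q /\ nf q = T.
Proof.
  revert z. induction x as [|e x IH]; intros z E.
  { exists [], []. destruct z; [split; auto|discriminate]. }
  destruct (classic (nf (e :: x) = T)) as [E2|E2]; [exists [], (e :: x); auto|].
  destruct z as [|z0 z1]; [contradiction|].
  assert (exists z', nf x = z' ++ T) as [z' Ez'].
  { unfold nf in E. rewrite nmul_cons in E. fold (nf x) in E.
    destruct (lmul_cases e (nf x)) as [H|[[a H]|[(a & b & r' & H1 & H2)|H]]].
    - rewrite H in E. eauto.
    - exists (a :: z0 :: z1). rewrite H, E. reflexivity.
    - rewrite H2 in E. injection E as -> ->. exists (a :: z1). exact H1.
    - rewrite H in E. injection E as _ E. eauto. }
  destruct (IH _ Ez') as (p & q & -> & Hq). exists (e :: p), q. auto.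
Qed.

Lemma nf_lpow_cyclically_reduced x k : nf x <> [] ->
  (forall d, projT1 (last (nf x) d) <> projT1 (hd d (nf x))) ->
  length (nf (lpow x k)) = k * length (nf x).
Proof.
  intros Hne Hc. unfold nf at 1. rewrite (nmul_lpow_nf x k [] I). fold (nf (lpow (nf x) k)).
  rewrite nf_id by auto using reduced_lpow, nf_reduced. apply lpow_length.
Qed.

(* If the normal form starts and ends with letters of the same factor, a cyclic
   rotation of [x] cancels or merges them. *)
Lemma nf_rotate_shorter x (y : letter) T (z : letter) :
  nf x = y :: T ++ [z] -> projT1 z = projT1 y ->
  exists p q, x = p ++ q /\ length (nf (q ++ p)) < length (nf x).
Proof.
  intros Ex Ezy. assert (Hred : reduced (y :: T ++ [z])) by (rewrite <- Ex; apply nf_reduced).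
  destruct (nf_suffix x [y] (T ++ [z]) Ex) as (p & q & -> & Hq).
  assert (Hp : nf p = [y]).
  { unfold nf. set (X := nmul (linv q) []).
    assert (HX : reduced X) by apply nmul_reduced, I.
    rewrite <- (nmul_linv_r q [] I) at 1. fold X. rewrite <- nmul_app.
    rewrite (nmul_nf (p ++ q) X HX), Ex, nmul_cons, <- Hq, <- nmul_nf by exact HX.
    unfold X. rewrite nmul_linv_r by exact I. apply lmul_reduced_cons. simpl in Hred |- *. tauto. }
  exists p, q. split; [reflexivity|].
  unfold nf at 1. rewrite nmul_app. fold (nf p). rewrite Hp, nmul_nf, Hq by (simpl in Hred |- *; tauto).
  rewrite Ex, nmul_app. cbn [length]. rewrite length_app. cbn [length].
  pose proof (nmul_length T (nmul [z] [y])).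
  assert (length (nmul [z] [y]) <= 1).
  { destruct z as [n g], y as [n' h]. simpl in Ezy. subst n'. rewrite nmul_cons.
    destruct (dec (g = gone)) as [->|Hg]; [rewrite lmul_one; simpl; lia|].
    change (nmul [] [ltr n h]) with [ltr n h]. rewrite lmul_same by exact Hg.
    destruct (dec _); simpl; lia. }
  lia.
Qed.

Lemma rotate_rotate {T} (p q p' q' : list T) : q ++ p = p' ++ q' ->
  exists p'' q'', p ++ q = p'' ++ q'' /\ q' ++ p' = q'' ++ p''.
Proof.
  intros E. destruct (app_eq_app _ _ _ _ E) as (l & [[-> ->]|[-> ->]]).
  - exists (p ++ p'), l. rewrite <- !app_assoc. auto.
  - exists l, (q' ++ q). rewrite <- !app_assoc. auto.
Qed.

Theorem torsion_rotation k x : 0 < k -> nf (lpow x k) = [] ->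
  exists p q, x = p ++ q /\ length (nf (q ++ p)) <= 1.
Proof.
  intros Hk. induction x as [x IH] using (induction_ltof1 _ (fun x => length (nf x))).
  intros Hpow.
  destruct (nf x) as [|y T] eqn:Ex; [exists [], x; rewrite app_nil_r, Ex; simpl; auto|].
  destruct T as [|t T'] eqn:ET; [exists [], x; rewrite app_nil_r, Ex; simpl; auto|].
  rewrite <- ET in Ex. assert (HT : T <> []) by (subst; discriminate).
  destruct (exists_last HT) as (T0 & z & ET0). rewrite ET0 in Ex.
  destruct (Nat.eq_dec (projT1 z) (projT1 y)) as [Ezy|Ezy].
  - destruct (nf_rotate_shorter x y T0 z Ex Ezy) as (p & q & -> & Hlt).
    destruct (IH (q ++ p) Hlt (nf_lpow_rotate p q k Hpow)) as (p' & q' & E1 & E2).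
    destruct (rotate_rotate p q p' q' E1) as (p'' & q'' & E3 & E4).
    exists p'', q''. rewrite <- E4. auto.
  - exfalso. assert (Hc : forall d, projT1 (last (nf x) d) <> projT1 (hd d (nf x))).
    { intros d. rewrite Ex, app_comm_cons, last_last. exact Ezy. }
    pose proof (nf_lpow_cyclically_reduced x k ltac:(rewrite Ex; discriminate) Hc) as Hl.
    rewrite Hpow, Ex in Hl. simpl in Hl. lia.
Qed.

End FreeProduct.

Section StronglySortedFacts.
Variables (T : Type) (R : T -> T -> Prop).

Lemma StronglySorted_app a b : StronglySorted R a -> StronglySorted R b ->
  (forall x y, In x a -> In y b -> R x y) -> StronglySorted R (a ++ b).
Proof.
  induction a as [|e a IH]; intros Ha Hb H; simpl; auto.
  apply StronglySorted_inv in Ha as [Ha1 Ha2]. constructor.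
  - apply IH; auto. intros; apply H; simpl; auto.
  - apply Forall_app. split; auto. apply Forall_forall. intros; apply H; simpl; auto.
Qed.

Lemma StronglySorted_app_inv a b x y :
  StronglySorted R (a ++ b) -> In x a -> In y b -> R x y.
Proof.
  induction a as [|e a IH]; intros H Hx Hy; simpl in *; [tauto|].
  apply StronglySorted_inv in H as [H1 H2]. destruct Hx as [->|Hx]; auto.
  rewrite Forall_forall in H2. apply H2, in_or_app; auto.
Qed.

Lemma StronglySorted_filter (f : T -> bool) s :
  StronglySorted R s -> StronglySorted R (filter f s).
Proof.
  induction 1 as [|a s _ IH Ha]; simpl; [constructor|]. destruct (f a); auto. constructor; auto.
  rewrite Forall_forall in *. intros z Hz. apply filter_In in Hz as [Hz _]. auto.
Qed.

Hypothesis R_irrefl : forall x, ~ R x x.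
Hypothesis R_trans : forall x y z, R x y -> R y z -> R x z.

Lemma StronglySorted_unique s t : StronglySorted R s -> StronglySorted R t ->
  (forall x, In x s <-> In x t) -> s = t.
Proof.
  revert t. induction s as [|a s IH]; intros t Hs Ht Hst.
  { destruct t as [|b t]; auto. exfalso. apply (Hst b). simpl; auto. }
  destruct t as [|b t]; [exfalso; apply (Hst a); simpl; auto|].
  apply StronglySorted_inv in Hs as [Hs1 Hs2], Ht as [Ht1 Ht2].
  rewrite Forall_forall in Hs2, Ht2.
  assert (a = b) as <-.
  { destruct (classic (a = b)) as [E|E]; auto. exfalso.
    assert (Ha : In a (b :: t)) by (apply Hst; simpl; auto).
    assert (Hb : In b (a :: s)) by (apply Hst; simpl; auto).
    destruct Ha as [Ha|Ha]; [congruence|]. destruct Hb as [Hb|Hb]; [congruence|].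
    apply (R_irrefl a). eauto. }
  f_equal. apply IH; auto. intros x. split; intros Hx.
  - assert (In x (a :: t)) as [->|?] by (apply Hst; simpl; auto); auto.
    exfalso. apply (R_irrefl x), Hs2, Hx.
  - assert (In x (a :: s)) as [->|?] by (apply Hst; simpl; auto); auto.
    exfalso. apply (R_irrefl x), Ht2, Hx.
Qed.

Hypothesis R_total : forall x y, x = y \/ R x y \/ R y x.

Lemma StronglySorted_insert s a : StronglySorted R s ->
  exists s', StronglySorted R s' /\ forall x, In x s' <-> x = a \/ In x s.
Proof.
  induction 1 as [|b s Hs IH Hb].
  { exists [a]. split; [repeat constructor|]. simpl. intuition congruence. }
  destruct (R_total a b) as [<-|[Hab|Hba]].
  - exists (a :: s). split; [constructor; auto|]. simpl. intuition congruence.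
  - exists (a :: b :: s). split; [|simpl; intuition congruence].
    constructor; [constructor; auto|]. constructor; auto.
    rewrite Forall_forall in *. eauto.
  - destruct IH as (s' & Hs' & Hm). exists (b :: s'). split.
    + constructor; auto. rewrite Forall_forall in *. intros x Hx. apply Hm in Hx as [->|Hx]; auto.
    + intros x. simpl. rewrite Hm. intuition congruence.
Qed.

Lemma StronglySorted_sort l : exists s, StronglySorted R s /\ forall x, In x s <-> In x l.
Proof.
  induction l as [|a l IH].
  { exists []. split; [constructor|]. simpl; tauto. }
  destruct IH as (s & Hs & Hm). destruct (StronglySorted_insert s a Hs) as (s' & Hs' & Hm').
  exists s'. split; auto. intros x. rewrite Hm', Hm. simpl. intuition congruence.
Qed.

End StronglySortedFacts.

Lemma StronglySorted_rev {T} (R : T -> T -> Prop) s : StronglySorted R s -> StronglySorted (fun a b => R b a) (rev s).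
Proof.
  induction 1 as [|a s _ IH Ha]; simpl; [constructor|]. apply (StronglySorted_app _ (fun a b => R b a)); auto.
  - repeat constructor.
  - intros x y Hx [<-|[]]. rewrite Forall_forall in Ha. apply Ha, in_rev, Hx.
Qed.

Lemma StronglySorted_map {T U} (R : T -> T -> Prop) (R' : U -> U -> Prop) (f : T -> U) s :
  (forall x y, R x y -> R' (f x) (f y)) -> StronglySorted R s -> StronglySorted R' (map f s).
Proof.
  intros Hf. induction 1; simpl; constructor; auto.
  rewrite Forall_forall in *. intros z Hz. apply in_map_iff in Hz as (z' & <- & Hz'). auto.
Qed.

Definition asbool (P : Prop) : bool := if dec P then true else false.

Lemma asboolE (P : Prop) : asbool P = true <-> P.
Proof. unfold asbool. destruct (dec P); split; auto; discriminate. Qed.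

Section Words.
Variable G : nat -> Grp.
Local Notation ltr n g := (existT (fun j => gcar (G j)) n g).
Implicit Types W V : raw_word G.

Definition strict_order W : Prop :=
  (forall x, ~ plt W x x) /\ (forall x y z, plt W x y -> plt W y z -> plt W x z).

Definition level_word W m (l : list (letter G)) : Prop :=
  exists s, restr W m s /\ map (plet W) s = l.

Lemma is_word_strict_order W : is_word W -> strict_order W.
Proof. intros (H1 & H2 & _). split; auto. Qed.

Lemma restr_unique W m s t : strict_order W -> restr W m s -> restr W m t -> s = t.
Proof.
  intros [H1 H2] [Hs1 Hs2] [Ht1 Ht2]. apply (StronglySorted_unique _ (plt W)); auto.
  intros x. rewrite Hs2, Ht2. tauto.
Qed.

Lemma restr_exists W m : is_word W -> exists s, restr W m s.
Proof.
  intros (_ & Htr & Htot & _ & _ & Hfin).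
  assert (Hc : exists c, forall x, projT1 (plet W x) <= m -> In x c).
  { induction m as [|m (c & Hc)].
    - destruct (Hfin 0) as (c & Hc). exists c. intros x Hx. apply Hc. lia.
    - destruct (Hfin (S m)) as (c' & Hc'). exists (c ++ c'). intros x Hx. apply in_or_app.
      destruct (Nat.eq_dec (projT1 (plet W x)) (S m)); [right; auto|left; apply Hc; lia]. }
  destruct Hc as (c & Hc).
  destruct (StronglySorted_sort _ (plt W) Htr Htot
    (filter (fun x => projT1 (plet W x) <=? m) c)) as (s & Hs & Hm).
  exists s. split; auto. intros x. rewrite Hm, filter_In, Nat.leb_le. intuition.
Qed.

Lemma level_word_unique W m l l' : strict_order W -> level_word W m l -> level_word W m l' ->
  l = l'.
Proof. intros HW (s & Hs & <-) (s' & Hs' & <-). rewrite (restr_unique W m s s'); auto. Qed.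

Lemma level_word_below W m l : level_word W m l -> below G m l.
Proof.
  intros (s & [_ Hs] & <-). apply Forall_forall. intros e He.
  apply in_map_iff in He as (x & <- & Hx). apply Hs, Hx.
Qed.

Lemma strict_order_concat W V : strict_order W -> strict_order V -> strict_order (wconcat W V).
Proof.
  intros [HW1 HW2] [HV1 HV2]. split.
  - intros [x|x]; simpl; auto.
  - intros [x|x] [y|y] [z|z]; simpl; eauto; tauto.
Qed.

Lemma strict_order_inv W : strict_order W -> strict_order (winv W).
Proof. intros [H1 H2]. split; simpl; eauto. Qed.

Lemma level_word_concat W V m l1 l2 :
  level_word W m l1 -> level_word V m l2 -> level_word (wconcat W V) m (l1 ++ l2).
Proof.
  intros (s1 & [Hs1 Hm1] & <-) (s2 & [Hs2 Hm2] & <-).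
  exists (map inl s1 ++ map inr s2). split; [split|].
  - apply StronglySorted_app.
    + apply (StronglySorted_map (plt W)); auto.
    + apply (StronglySorted_map (plt V)); auto.
    + intros x y Hx Hy. apply in_map_iff in Hx as (? & <- & _), Hy as (? & <- & _). exact I.
  - intros [x|x]; simpl; rewrite in_app_iff, !in_map_iff; [rewrite <- Hm1|rewrite <- Hm2];
      split; intros H; try destruct H as [(y & E & Hy)|(y & E & Hy)]; try discriminate;
      try (injection E as ->; auto); eauto.
  - rewrite map_app, !map_map. reflexivity.
Qed.

Lemma level_word_inv W m l : level_word W m l -> level_word (winv W) m (linv G l).
Proof.
  intros (s & [Hs Hm] & <-). exists (rev s). split; [split|].
  - apply (StronglySorted_rev (plt W)), Hs.
  - intros x. rewrite <- in_rev. apply Hm.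
  - unfold linv. rewrite map_rev, map_map. reflexivity.
Qed.

Lemma level_word_empty m : level_word wempty m [].
Proof. exists []. split; [split; [constructor|intros []]|reflexivity]. Qed.

Lemma level_word_single i (a : G i) m : level_word (wsingle i a) m (trunc G m [ltr i a]).
Proof.
  unfold trunc. simpl. destruct (Nat.leb_spec i m) as [H|H].
  - exists [tt]. split; [split; [repeat constructor|intros []; simpl; intuition]|reflexivity].
  - exists []. split; [split; [constructor|intros []; simpl; lia]|reflexivity].
Qed.

Lemma level_word_pow W m l k : level_word W m l -> level_word (wpow W k) m (lpow G l k).
Proof.
  intros H. induction k; simpl; [apply level_word_empty|apply level_word_concat; auto].
Qed.

Lemma is_word_inv W : is_word W -> is_word (winv W).
Proof.
  intros (H1 & H2 & H3 & H4 & H5 & H6). repeat split; simpl; eauto.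
  - intros x y. destruct (H3 x y) as [?|[?|?]]; auto.
  - intros x Hx. apply (H5 x), ginv_eq1, Hx.
Qed.

Lemma word_equiv_of_nf W V :
  (forall m l1 l2, level_word W m l1 -> level_word V m l2 -> nf G l1 = nf G l2) ->
  word_equiv W V.
Proof.
  intros H m s1 s2 H1 H2.
  assert (L1 : level_word W m (map (plet W) s1)) by (exists s1; auto).
  assert (L2 : level_word V m (map (plet V) s2)) by (exists s2; auto).
  apply fp_equiv_of_nf_eq; eauto using level_word_below.
Qed.

Section Subword.
Variables (W : raw_word G) (D : pos W -> Prop).

Definition subword : raw_word G :=
  RW {x | D x} (fun a b => plt W (proj1_sig a) (proj1_sig b)) (fun a => plet W (proj1_sig a)).

Lemma subpos_inj (a b : {x | D x}) : proj1_sig a = proj1_sig b -> a = b.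
Proof. destruct a, b. simpl. intros ->. f_equal. apply proof_irrelevance. Qed.

Fixpoint subpos (l : list (pos W)) : list {x | D x} :=
  match l with
  | [] => []
  | y :: l' => match dec (D y) with left H => exist _ y H :: subpos l' | right _ => subpos l' end
  end.

Lemma subpos_map l : map (@proj1_sig _ _) (subpos l) = filter (fun x => asbool (D x)) l.
Proof.
  induction l as [|y l IH]; simpl; auto. unfold asbool.
  destruct (dec (D y)); simpl; f_equal; auto.
Qed.

Lemma in_subpos l a : In a (subpos l) <-> In (proj1_sig a) l.
Proof.
  induction l as [|y l IH]; simpl; [tauto|].
  destruct (dec (D y)) as [Hy|Hy]; simpl; rewrite IH.
  - split; intros [E|E]; auto; left; [rewrite <- E; reflexivity|apply subpos_inj; auto].
  - split; [tauto|]. intros [E|E]; auto. exfalso. apply Hy. rewrite E. apply proj2_sig.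
Qed.

Lemma is_word_subword : is_word W -> is_word subword.
Proof.
  intros (H1 & H2 & H3 & (f & Hf) & H5 & H6). repeat split.
  - intros x. apply H1.
  - intros x y z. apply H2.
  - intros x y. destruct (H3 (proj1_sig x) (proj1_sig y)) as [E|[E|E]]; auto.
    left. apply subpos_inj, E.
  - exists (fun a => f (proj1_sig a)). intros x y E. apply subpos_inj; auto.
  - intros x. apply H5.
  - intros n. destruct (H6 n) as (c & Hc). exists (subpos c). intros x Hx.
    apply in_subpos, Hc, Hx.
Qed.

Lemma level_word_subword m s :
  restr W m s -> level_word subword m (map (plet W) (filter (fun x => asbool (D x)) s)).
Proof.
  intros [Hs Hm]. exists (subpos s). split; [split|].
  - clear Hm. induction Hs as [|y l Hl IH Hy]; simpl; [constructor|].
    destruct (dec (D y)); auto. constructor; auto.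
    rewrite Forall_forall in *. intros a Ha. apply Hy, in_subpos, Ha.
  - intros a. rewrite in_subpos. apply Hm.
  - rewrite <- subpos_map, map_map. reflexivity.
Qed.

End Subword.
End Words.

Definition rot {T} (l : list T) i := skipn i l ++ firstn i l.

Lemma rot_app {T} (p q : list T) : rot (p ++ q) (length p) = q ++ p.
Proof.
  unfold rot. rewrite firstn_app, skipn_app, Nat.sub_diag, firstn_all, skipn_all.
  simpl. rewrite app_nil_r. reflexivity.
Qed.

Lemma map_rot {T U} (f : T -> U) l i : map f (rot l i) = rot (map f l) i.
Proof. unfold rot. rewrite map_app, firstn_map, skipn_map. reflexivity. Qed.

Lemma in_firstn_le {T} i j (l : list T) x : i <= j -> In x (firstn i l) -> In x (firstn j l).
Proof.
  intros Hij H. replace (firstn i l) with (firstn i (firstn j l)) in H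
    by (rewrite firstn_firstn; f_equal; lia).
  rewrite <- (firstn_skipn i (firstn j l)). apply in_or_app; auto.
Qed.

Lemma filter_comm {T} (f g : T -> bool) l : filter f (filter g l) = filter g (filter f l).
Proof.
  induction l as [|a l IH]; simpl; auto.
  destruct (g a) eqn:Eg, (f a) eqn:Ef; simpl; rewrite ?Eg, ?Ef, IH; auto.
Qed.

Lemma filter_app_split {T} (f : T -> bool) a b :
  (forall x, In x a -> f x = true) -> (forall x, In x b -> f x = false) ->
  filter f (a ++ b) = a /\ filter (fun x => negb (f x)) (a ++ b) = b.
Proof.
  intros Ha Hb. rewrite !filter_app.
  rewrite (forallb_filter_id f a), (filter_ext_in _ (fun _ => false) b), filter_false,
    (filter_ext_in _ (fun _ => false) a), filter_false, (filter_ext_in _ (fun _ => true) b),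
    filter_true, app_nil_r; auto.
  - intros x Hx. rewrite Hb; auto.
  - intros x Hx. rewrite Ha; auto.
  - apply forallb_forall. auto.
Qed.

Lemma monotone_family_stabilizes {T} (L : nat -> T -> Prop) (l : list T) m :
  (forall n N x, n <= N -> L n x -> L N x) ->
  exists M, m <= M /\ forall x, In x l -> ((exists n, L n x) <-> L M x).
Proof.
  intros Hmono. induction l as [|x l (M0 & HM0 & IH)].
  { exists m. split; auto. intros _ []. }
  destruct (classic (exists n, L n x)) as [(n & Hn)|Hx].
  - exists (Nat.max M0 n). split; [lia|]. intros y [<-|Hy]; split; eauto.
    + intros _. apply (Hmono n); auto; lia.
    + intros Hy'. apply (Hmono M0); [lia|]. apply IH; auto.
  - exists M0. split; auto. intros y [<-|Hy]; [split; eauto; tauto|auto].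
Qed.

Lemma short_family_determined {G : nat -> Grp} (t : nat -> list (letter G)) :
  (forall m, length (t m) <= 1) -> (forall m M, m <= M -> t m = trunc G m (t M)) ->
  exists m0, forall m, t m = trunc G m (t m0).
Proof.
  intros Hlen Hcomp. destruct (classic (forall m, t m = [])) as [Hnil|Hne].
  { exists 0. intros m. rewrite (Hnil 0), Hnil. reflexivity. }
  apply not_all_ex_not in Hne as [m0 Hm0]. exists m0. intros m.
  destruct (Nat.le_ge_cases m m0) as [Hle|Hge]; [apply Hcomp, Hle|].
  pose proof (Hcomp m0 m Hge) as Hc. pose proof (Hlen m) as Hl.
  destruct (t m) as [|e [|]]; [contradiction|..|simpl in Hl; lia].
  unfold trunc in *. simpl in *. destruct (Nat.leb_spec (projT1 e) m0); [|contradiction].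
  rewrite Hc. simpl. destruct (Nat.leb_spec (projT1 e) m); [reflexivity|lia].
Qed.

Section Conjugator.
Variables (G : nat -> Grp) (w : raw_word G).
Hypothesis w_word : is_word w.
Variable k : nat.
Hypothesis k_pos : 0 < k.
Hypothesis w_torsion : word_equiv (wpow w k) wempty.

Local Notation nf := (nf G).
Local Notation trunc := (trunc G).
Local Notation below := (below G).

Definition idx (x : pos w) := projT1 (plet w x).
Definition at_level m (x : pos w) := idx x <=? m.

Definition level m : list (pos w) :=
  proj1_sig (constructive_indefinite_description _ (restr_exists G w m w_word)).

Lemma level_restr m : restr w m (level m).
Proof. unfold level. destruct (constructive_indefinite_description _ _). assumption. Qed.

Lemma w_strict_order : strict_order G w.
Proof. apply is_word_strict_order, w_word. Qed.

Lemma level_filter m M : m <= M -> level m = filter (at_level m) (level M).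
Proof.
  intros HmM. apply (restr_unique G w m); [apply w_strict_order|apply level_restr|].
  destruct (level_restr M) as [H1 H2]. split; [apply StronglySorted_filter, H1|].
  intros x. rewrite filter_In, H2. unfold at_level, idx. rewrite Nat.leb_le. intuition lia.
Qed.

Definition letters l := map (plet w) l.

Lemma trunc_letters m l : trunc m (letters l) = letters (filter (at_level m) l).
Proof. apply filter_map_swap. Qed.

Lemma level_word_level m : level_word G w m (letters (level m)).
Proof. exists (level m). split; [apply level_restr|reflexivity]. Qed.

Lemma letters_level_below m l : incl l (level m) -> below m (letters l).
Proof.
  intros Hl. apply Forall_forall. intros e He. apply in_map_iff in He as (x & <- & Hx).
  apply (level_restr m), Hl, Hx.
Qed.

Lemma level_torsion m : nf (lpow G (letters (level m)) k) = [].
Proof.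
  destruct (level_word_pow G w m _ k (level_word_level m)) as (s & Hs & <-).
  apply (nf_eq_of_fp_equiv G m _ []), (w_torsion m s []); [exact Hs|split; [constructor|intros []]].
Qed.

Definition good_cut m i := length (nf (letters (rot (level m) i))) <= 1.

Lemma good_cut_least m : exists i, good_cut m i /\ forall j, good_cut m j -> i <= j.
Proof.
  destruct (dec_inh_nat_subset_has_unique_least_element (good_cut m)) as (i & [Hi Hmin] & _).
  - intros; apply classic.
  - destruct (torsion_rotation G k _ k_pos (level_torsion m)) as (p & q & E & Hl).
    exists (length p). unfold good_cut, letters. rewrite map_rot.
    fold (letters (level m)). rewrite E, rot_app. exact Hl.
  - exists i. auto.
Qed.

Definition cut m := proj1_sig (constructive_indefinite_description _ (good_cut_least m)).

Lemma cut_spec m : good_cut m (cut m) /\ forall j, good_cut m j -> cut m <= j.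
Proof. unfold cut. destruct (constructive_indefinite_description _ _). assumption. Qed.

Lemma good_cut_trunc m M i : m <= M -> good_cut M i ->
  length (nf (letters (filter (at_level m) (rot (level M) i)))) <= 1.
Proof.
  intros HmM Hg. rewrite <- trunc_letters.
  apply (nf_trunc_length_le1 G M); [|exact Hg].
  apply letters_level_below. intros x Hx. unfold rot in Hx.
  rewrite <- (firstn_skipn i (level M)). apply in_app_or in Hx. apply in_or_app. tauto.
Qed.

(* The least good cut at level [M], restricted to level [m], is a good cut there; by
   minimality the least good cut at level [m] lies before it. *)
Lemma head_mono m M x : m <= M ->
  In x (firstn (cut m) (level m)) -> In x (firstn (cut M) (level M)).
Proof.
  intros HmM Hx. set (j := length (filter (at_level m) (firstn (cut M) (level M)))).
  assert (E : level m = filter (at_level m) (firstn (cut M) (level M)) ++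
                        filter (at_level m) (skipn (cut M) (level M))).
  { rewrite (level_filter m M HmM), <- filter_app, firstn_skipn. reflexivity. }
  assert (Hgood : good_cut m j).
  { unfold good_cut. rewrite E. unfold j. rewrite rot_app.
    replace (filter (at_level m) (skipn (cut M) (level M)) ++
             filter (at_level m) (firstn (cut M) (level M)))
      with (filter (at_level m) (rot (level M) (cut M))) by apply filter_app.
    apply good_cut_trunc; [exact HmM|apply cut_spec]. }
  apply (in_firstn_le _ j) in Hx; [|apply cut_spec, Hgood].
  rewrite E in Hx. unfold j in Hx. rewrite firstn_app, Nat.sub_diag, firstn_all, app_nil_r in Hx.
  apply filter_In in Hx. tauto.
Qed.

Definition in_head x := exists m, In x (firstn (cut m) (level m)).

Definition head_letters m := letters (filter (fun x => asbool (in_head x)) (level m)).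
Definition tail_letters m := letters (filter (fun x => negb (asbool (in_head x))) (level m)).

Lemma level_split m : letters (level m) = head_letters m ++ tail_letters m /\
  length (nf (tail_letters m ++ head_letters m)) <= 1.
Proof.
  destruct (monotone_family_stabilizes (fun n x => In x (firstn (cut n) (level n)))
    (level m) m) as (M & HmM & Hstab); [intros; eapply head_mono; eauto|].
  set (F := filter (at_level m) (firstn (cut M) (level M))).
  set (S := filter (at_level m) (skipn (cut M) (level M))).
  assert (E : level m = F ++ S).
  { rewrite (level_filter m M HmM). unfold F, S. rewrite <- filter_app, firstn_skipn. reflexivity. }
  assert (HF : forall x, In x F -> asbool (in_head x) = true).
  { intros x Hx. apply asboolE. exists M. apply filter_In in Hx. tauto. }
  assert (HS : forall x, In x S -> asbool (in_head x) = false).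
  { intros x Hx. destruct (asbool (in_head x)) eqn:Ex; [exfalso|reflexivity].
    apply asboolE, Hstab in Ex; [|rewrite E; apply in_or_app; auto].
    apply filter_In in Hx as [Hx _]. apply (proj1 w_strict_order x).
    apply (StronglySorted_app_inv _ (plt w) (firstn (cut M) (level M)) (skipn (cut M) (level M)));
      [rewrite firstn_skipn; apply level_restr|exact Ex|exact Hx]. }
  destruct (filter_app_split _ F S HF HS) as [Ehead Etail].
  unfold head_letters, tail_letters. rewrite E, Ehead, Etail. split.
  - apply map_app.
  - unfold letters. rewrite <- map_app. unfold F, S. rewrite <- filter_app.
    apply good_cut_trunc; [exact HmM|apply cut_spec].
Qed.

Definition rotated_nf m := nf (tail_letters m ++ head_letters m).

Lemma rotated_nf_trunc m M : m <= M -> rotated_nf m = trunc m (rotated_nf M).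
Proof.
  intros HmM. unfold rotated_nf.
  assert (E : tail_letters m ++ head_letters m = trunc m (tail_letters M ++ head_letters M)).
  { unfold trunc. rewrite filter_app. fold (trunc m (tail_letters M)) (trunc m (head_letters M)).
    unfold tail_letters, head_letters. rewrite !trunc_letters, !(filter_comm (at_level m)).
    rewrite <- level_filter by exact HmM. reflexivity. }
  rewrite E, (nf_trunc_nf G M).
  - apply nf_trunc_short; [apply nf_reduced|apply level_split].
  - unfold tail_letters, head_letters, letters. rewrite <- map_app.
    apply letters_level_below. intros x Hx.
    apply in_app_or in Hx as [Hx|Hx]; apply filter_In in Hx; tauto.
Qed.

Definition conjugator : raw_word G := winv (subword G w in_head).

Lemma is_word_conjugator : is_word conjugator.
Proof. apply is_word_inv, is_word_subword, w_word. Qed.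

(* With [h] the head and [t] the tail, the level-[m] word of the conjugate is
   [h^-1 (h t) h], which reduces to the rotation [t h]. *)
Lemma level_word_conjugate m l :
  level_word G (wconcat (wconcat conjugator w) (winv conjugator)) m l -> nf l = rotated_nf m.
Proof.
  intros Hl.
  assert (Hc : strict_order G conjugator)
    by apply is_word_strict_order, is_word_conjugator.
  assert (HW : strict_order G (wconcat (wconcat conjugator w) (winv conjugator)))
    by auto using strict_order_concat, strict_order_inv, w_strict_order.
  assert (Hlevel : level_word G (wconcat (wconcat conjugator w) (winv conjugator)) m
    (linv G (head_letters m) ++ letters (level m) ++ linv G (linv G (head_letters m)))).
  { rewrite app_assoc. repeat apply level_word_concat; try apply level_word_inv;
      [|apply level_word_level|apply level_word_inv];
      apply level_word_subword, level_restr. }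
  rewrite <- (level_word_unique G _ m _ _ HW Hlevel Hl), linvK, (proj1 (level_split m)).
  unfold rotated_nf, nf. rewrite !nmul_app, nmul_linv by (repeat apply nmul_reduced; exact I).
  reflexivity.
Qed.

Lemma conjugate_word_equiv V v : strict_order G V -> (forall m, level_word G V m (trunc m v)) ->
  reduced G v -> length v <= 1 -> (forall m, rotated_nf m = trunc m v) ->
  word_equiv (wconcat (wconcat conjugator w) (winv conjugator)) V.
Proof.
  intros HV HVv Hv Hlen Hcore. apply word_equiv_of_nf. intros m l1 l2 H1 H2.
  rewrite (level_word_conjugate m l1 H1), Hcore, <- (level_word_unique G V m _ _ HV (HVv m) H2).
  symmetry. apply nf_trunc_short; assumption.
Qed.

End Conjugator.

Theorem lemma22 (G : nat -> Grp) (w : raw_word G) :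
  is_word w ->
  (exists k : nat, 0 < k /\ word_equiv (wpow w k) wempty) ->
  exists u : raw_word G, is_word u /\
    (word_equiv (wconcat (wconcat u w) (winv u)) wempty \/
     exists (i : nat) (a : G i), a <> gone /\
       word_equiv (wconcat (wconcat u w) (winv u)) (wsingle i a)).
Proof.
  intros Hw (k & Hk & Hpow).
  set (t := rotated_nf G w Hw k Hk Hpow).
  exists (conjugator G w Hw k Hk Hpow). split; [apply is_word_conjugator|].
  destruct (short_family_determined t) as [m0 Hm0];
    [intros m; apply level_split|intros m M; apply rotated_nf_trunc|].
  assert (Hred : reduced G (t m0)) by apply nf_reduced.
  assert (Hlen : length (t m0) <= 1) by apply level_split.
  destruct (t m0) as [|[i a] [|]]; [left|right|simpl in Hlen; lia].
  - apply (conjugate_word_equiv G w Hw k Hk Hpow wempty []); auto.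
    + split; simpl; tauto.
    + apply level_word_empty.
  - exists i, a. split; [apply Hred|].
    apply (conjugate_word_equiv G w Hw k Hk Hpow (wsingle i a) [existT _ i a]); auto.
    + split; simpl; tauto.
    + apply level_word_single.
Qed.
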